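(* Let $\boldsymbol\phi(n,m,\alpha,\beta,l)\in\mathbb C^N$, $(n,m,\alpha,\beta,l)\in\mathbb Z^5$, satisfy the condition equation set: for all arguments, $$\sigma_1\boldsymbol\phi(n-1,\cdot,l)=\boldsymbol\phi(n,\cdot,l)-\boldsymbol\phi(n-1,\cdot,l+1),\quad \sigma_2\boldsymbol\phi(m-1,\cdot,l)=\boldsymbol\phi(m,\cdot,l)-\boldsymbol\phi(m-1,\cdot,l+1),$$ $$\sigma_3\boldsymbol\phi(\alpha-1,\cdot,l)=\boldsymbol\phi(\alpha,\cdot,l)-\boldsymbol\phi(\alpha-1,\cdot,l+1),\quad \sigma_4\boldsymbol\phi(\beta-1,\cdot,l)=\boldsymbol\phi(\beta,\cdot,l)-\boldsymbol\phi(\beta-1,\cdot,l+1),$$ $$\boldsymbol K\boldsymbol\phi(l)=\boldsymbol\phi(l+4)-\epsilon_1\boldsymbol\phi(l+3)+\epsilon_2\boldsymbol\phi(l+2)-\epsilon_3\boldsymbol\phi(l+1),$$ (in each identity only the indicated variable is shifted) where $\boldsymbol K$ is an arbitrary constant $N\times N$ matrix. Define the Casoratians (built from $\boldsymbol\phi$) $f'=|0,\dots,N-1|$, $g'=|0,\dots,N-2,N|$, $h'=|0,\dots,N-2,N+1|$, $s'=|0,\dots,N-3,N-1,N|$, $\theta'=|0,\dots,N-3,N-1,N+1|$, $\mu'=|0,\dots,N-2,N+2|$, $\nu'=|0,\dots,N-4,N-2,N-1,N|$. Then $$\widetilde f'(\sigma_1g'+h')-\widetilde g'(\sigma_1f'+g')+f'\widetilde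 s'=0,\qquad \widehat f'(\sigma_2g'+h')-\widehat g'(\sigma_2f'+g')+f'\widehat s'=0,$$ $$\widetilde f'(\sigma_1h'+\mu')-\widetilde h'(\sigma_1f'+g')+f'\widetilde\theta'=0,\qquad \widehat f'(\sigma_2h'+\mu')-\widehat h'(\sigma_2f'+g')+f'\widehat\theta'=0,$$ $$\widetilde f'(\sigma_1s'+\theta')-f'(\sigma_1\widetilde s'-\widetilde\nu')-\widetilde g's'=0,\qquad \widehat f'(\sigma_2s'+\theta')-f'(\sigma_2\widehat s'-\widehat\nu')-\widehat g's'=0,$$ $$\widetilde f'\widehat g'-\widehat f'\widetilde g'+(\sigma_1-\sigma_2)(\widetilde f'\widehat f'-f'\widehat{\widetilde f}')=0,$$ $$R(\sigma_1,\sigma_2)(f'\widehat{\widetilde f}'-\widetilde f'\widehat f')+Q(\sigma_1,\sigma_2)(g'\widehat{\widetilde f}'-f'\widehat{\widetilde g}')-(\sigma_1+\sigma_2+\epsilon_1)(g'\widehat{\widetilde g}'-f'\widehat{\widetilde h}'-\widehat{\widetilde f}'s')+g'\widehat{\widetilde h}'-s'\widehat{\widetilde g}'-f'\widehat{\widetilde\mu}'+\nu'\widehat{\widetilde f}'=0.$$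
   Context: Fix $\alpha_1,\alpha_2,\alpha_3,\delta\in\mathbb C$ and pairwise distinct $p,q,a,b\in\mathbb C$. Put $\sigma_1=p-\delta$, $\sigma_2=q-\delta$, $\sigma_3=a-\delta$, $\sigma_4=b-\delta$; $\epsilon_1=4\delta-\alpha_3$, $\epsilon_2=6\delta^2-3\delta\alpha_3+\alpha_2$, $\epsilon_3=4\delta^3-3\delta^2\alpha_3+2\delta\alpha_2-\alpha_1$; $Q(x,y)=(x+y)^2-xy+\epsilon_1(x+y)+\epsilon_2$; $R(x,y)=(x+y)(x^2+y^2)+\epsilon_1((x+y)^2-xy)+\epsilon_2(x+y)+\epsilon_3$. Casoratian notation: $|l_1,\dots,l_N|=\det(\boldsymbol\phi(l_1),\dots,\boldsymbol\phi(l_N))$ where $\boldsymbol\phi(l)$ means $\boldsymbol\phi(n,m,\alpha,\beta,l)$; a run ''$0,\dots,j$'' with $j<0$ is empty, and if the listed indices number more than $N$ the symbol is defined to be $0$. Shifts of a function $F(n,m)$: $\widetilde F=F(n+1,m)$, $\widehat F=F(n,m+1)$, $\widehat{\widetilde F}=F(n+1,m+1)$. *)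

(* Complex numbers are modelled as R[i] = complex R for an
   arbitrary R : realType (i.e. a complete archimedean ordered field = the reals). *)
From HB Require Import structures.
From mathcomp Require Import all_boot all_order all_algebra.
From mathcomp Require Import reals complex.
Set Implicit Arguments. Unset Strict Implicit. Unset Printing Implicit Defensive.
Import Order.TTheory GRing.Theory Num.Theory.
Local Open Scope ring_scope.
Local Open Scope complex_scope.

Definition irun (j : int) : seq int :=
  if (j < 0)%R then [::] else [seq Posz k | k <- iota 0 (absz j).+1].

(* Casoratian |l_1,...,l_k| of phi : int -> C^N : det of the matrix whose
   j-th column is phi (l_j); defined to be 0 when more than N indices are listed. *)
Definition casoratian (C : comNzRingType) (N : nat) (phi : int -> 'cV[C]_N)
  (s : seq int) : C :=
  if size s == N then \det (\matrix_(i < N, j < N) phi (nth 0 s j) i ord0)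
  else 0.

Section Params.
Variable C : comNzRingType.
Definition eps1 (al3 delta : C) : C := 4 * delta - al3.
Definition eps2 (al2 al3 delta : C) : C := 6 * delta ^+ 2 - 3 * delta * al3 + al2.
Definition eps3 (al1 al2 al3 delta : C) : C :=
  4 * delta ^+ 3 - 3 * delta ^+ 2 * al3 + 2 * delta * al2 - al1.
Definition Qpol (e1 e2 x y : C) : C := (x + y) ^+ 2 - x * y + e1 * (x + y) + e2.
Definition Rpol (e1 e2 e3 x y : C) : C :=
  (x + y) * (x ^+ 2 + y ^+ 2) + e1 * ((x + y) ^+ 2 - x * y) + e2 * (x + y) + e3.
End Params.

From HB Require Import structures.
From mathcomp Require Import all_boot all_order all_algebra.
From mathcomp Require Import reals complex.
From mathcomp Require Import ring zify.
Import Order.TTheory GRing.Theory Num.Theory.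

(* Every identity is a Pluecker relation.  For N+1 vectors W_0, ..., W_N in F^N, expanding
   the (N+1) x (N+1) determinant with a repeated row gives
   sum_k (-1)^k |W without W_k| W_k = 0, and applying the linear functional
   psi v = |P, v| yields a quadratic relation between Casoratians.  Take for W the
   shifted columns (tilde or hat) and for P the unshifted ones: the discrete equation
   phi~_k = s phi_k + phi_(k+1) makes psi vanish on all but the last three or four W_k,
   and the surviving terms are f', g', h', s', theta', mu', nu'.  For the last
   identity the recurrence for K rewrites u_(k+2) - (s1+s2+e1) u_(k+1) + Q u_k as
   K x_k + R w_k + c x_k, and the Cramer relation for the x_k annihilates the K x_k
   and x_k parts.  When N = 1 everything is a scalar identity. *)

Set Implicit Arguments. Unset Strict Implicit. Unset Printing Implicit Defensive.
Local Open Scope ring_scope.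

Definition rem_nth (T : Type) (k : nat) (s : seq T) := take k s ++ drop k.+1 s.

Section RemNth.
Variable T : Type.
Implicit Types (s : seq T) (y : nat -> T).

Lemma size_rem_nth k s : (k < size s)%N -> size (rem_nth k s) = (size s).-1.
Proof. by move=> h; rewrite /rem_nth size_cat size_take size_drop h; lia. Qed.

Lemma nth_rem_nth x0 k s i : (k < size s)%N ->
  nth x0 (rem_nth k s) i = nth x0 s (if (i < k)%N then i else i.+1).
Proof.
move=> h; rewrite /rem_nth nth_cat size_take h.
by case: ltnP => hi; [rewrite nth_take | rewrite nth_drop; congr nth; lia].
Qed.

Lemma rem_nth_rcons k s x : (k < size s)%N -> rem_nth k (rcons s x) = rcons (rem_nth k s) x.
Proof.
move=> h; rewrite /rem_nth -!cats1 take_cat drop_cat h.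
case: ltnP => h2; first by rewrite catA.
have -> : k.+1 = size s by lia.
by rewrite subnn drop0 drop_size cats0.
Qed.

Lemma rem_nth_last k s x : size s = k -> rem_nth k (rcons s x) = s.
Proof.
by move=> <-; rewrite /rem_nth -cats1 take_size_cat // drop_cat ltnNge leqnSn /= subSnn /= cats0.
Qed.

Lemma rem_nth_mkseq_last y n : rem_nth n (mkseq y n.+1) = mkseq y n.
Proof. by rewrite mkseqS rem_nth_last ?size_mkseq. Qed.

Lemma rem_nth_mkseq y n k : rem_nth n (mkseq y (k + n).+1) = mkseq y n ++ map y (iota n.+1 k).
Proof.
rewrite /rem_nth /mkseq -map_take -map_drop take_iota drop_iota add0n.
by rewrite (minn_idPl _) ?leqW ?leq_addl // subSS addnK.
Qed.

Lemma mem_mkseq (U : eqType) (y : nat -> U) k n : (k < n)%N -> y k \in mkseq y n.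
Proof. by move=> hk; apply: map_f; rewrite mem_iota. Qed.

End RemNth.

Lemma big_nat3 (V : nmodType) (G : nat -> V) m :
  \sum_(m <= k < m.+3) G k = G m + G m.+1 + G m.+2.
Proof. by rewrite !big_nat_recr ?big_geq ?leqnn //= ?add0r //; lia. Qed.

Lemma scalar_sum (R : comNzRingType) (U : lmodType R) (psi : U -> R) : scalar psi ->
  forall (I : Type) (r : seq I) (P : pred I) (c : I -> R) (v : I -> U),
  psi (\sum_(i <- r | P i) c i *: v i) = \sum_(i <- r | P i) c i * psi (v i).
Proof.
move=> psi_lin I r P c v; have psiZ := scalable_linear psi_lin.
have psiD a b : psi (a + b) = psi a + psi b by have := psi_lin 1 a b; rewrite scale1r mul1r.
have psi0 : psi 0 = 0 by rewrite -(scale0r (0 : U)) psiZ /= mul0r.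
by rewrite (big_morph psi psiD psi0); apply: eq_bigr => i _; rewrite psiZ.
Qed.

Lemma big_nat_pred (V : nmodType) (G : nat -> V) m a :
  ((0 < m)%N -> G m.-1 = a) -> (m = 0 -> a = 0) -> \sum_(m.-1 <= k < m) G k = a.
Proof. by case: m => [|m] hG h0; [rewrite big_geq // h0 | rewrite big_nat1 hG]. Qed.

Section ColumnDeterminant.
Variables (F : comNzRingType) (N : nat).
Implicit Types (L P R W : seq 'cV[F]_N) (v w : 'cV[F]_N).

Definition mx_of_cols L : 'M[F]_N := \matrix_(i, j) nth 0 L j i 0.
Definition det_seq L : F := if size L == N then \det (mx_of_cols L) else 0.

Lemma det_seq_size L : size L != N -> det_seq L = 0.
Proof. by rewrite /det_seq => /negbTE ->. Qed.

Lemma det_seq_dup L : ~~ uniq L -> det_seq L = 0.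
Proof.
rewrite /det_seq; case: eqP => // hs /(uniqPn 0) [i [j [hij hj he]]].
have hj' : (j < N)%N by rewrite -hs.
have hi' : (i < N)%N by apply: ltn_trans hj'.
rewrite -det_tr; apply: (determinant_alternate (i1 := Ordinal hi') (i2 := Ordinal hj')).
  by rewrite neq_ltn hij.
by move=> k; rewrite /mx_of_cols !mxE he.
Qed.

Lemma det_seq_mem P L R v : v \in L -> det_seq (P ++ L ++ v :: R) = 0.
Proof. by move=> hv; apply: det_seq_dup; rewrite !cat_uniq /= hv !andbF. Qed.

Lemma det_seq_meml P R v : v \in P -> det_seq (P ++ v :: R) = 0.
Proof. exact: (@det_seq_mem [::]). Qed.

Lemma det_seq_linear P R : scalar (fun v => det_seq (P ++ v :: R)).
Proof.
move=> a v w; rewrite /det_seq !size_cat /=; case: eqP => hs; last by rewrite mulr0 addr0.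
have hi : (size P < N)%N by lia.
have nth_slot u u' k : k != size P -> nth 0 (P ++ u :: R) k = nth 0 (P ++ u' :: R) k.
  move=> hkP; rewrite !nth_cat; case: ltnP => // hk.
  by case e: (k - size P)%N => //; move: hkP; rewrite eqn_leq hk -subn_eq0 e.
rewrite -[\det (mx_of_cols (P ++ w :: R))]mul1r -!(det_tr (mx_of_cols _)).
apply: (determinant_multilinear (i0 := Ordinal hi)).
- by apply/rowP => j; rewrite /mx_of_cols !mxE !nth_cat ltnn subnn /= !mxE mul1r.
- apply/matrixP => k j; rewrite /mx_of_cols !mxE (nth_slot _ (a *: v + w)) //.
  by rewrite eq_sym (neq_lift (Ordinal hi) k).
- apply/matrixP => k j; rewrite /mx_of_cols !mxE (nth_slot w (a *: v + w)) //.
  by rewrite eq_sym (neq_lift (Ordinal hi) k).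
Qed.

Lemma det_seqZ P R a v : det_seq (P ++ (a *: v) :: R) = a * det_seq (P ++ v :: R).
Proof. exact: (scalable_linear (det_seq_linear P R)). Qed.

Lemma det_seqB P R v w :
  det_seq (P ++ (v - w) :: R) = det_seq (P ++ v :: R) - det_seq (P ++ w :: R).
Proof. exact: (zmod_morphism_linear (det_seq_linear P R)). Qed.

Lemma det_seqD P R v w :
  det_seq (P ++ (v + w) :: R) = det_seq (P ++ v :: R) + det_seq (P ++ w :: R).
Proof. by have := det_seq_linear P R 1 v w; rewrite scale1r mul1r. Qed.

Lemma det_seq_swap P R v w : det_seq (P ++ v :: w :: R) = - det_seq (P ++ w :: v :: R).
Proof.
have dup u : det_seq (P ++ u :: u :: R) = 0.
  by apply: det_seq_dup; rewrite cat_uniq /= inE eqxx !andbF.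
have split2 x y : det_seq (P ++ x :: y :: R) = det_seq (rcons P x ++ y :: R) by rewrite cat_rcons.
apply/eqP; rewrite -addr_eq0; apply/eqP.
by have := dup (v + w); rewrite det_seqD !split2 !det_seqD -!split2 !dup add0r addr0.
Qed.

Lemma det_seq_rot P L v : det_seq (P ++ v :: L) = (-1) ^+ size L * det_seq (P ++ rcons L v).
Proof.
elim: L P => [|y L IH] P /=; first by rewrite mul1r.
by rewrite det_seq_swap -cat_rcons IH cat_rcons exprS mulN1r mulNr.
Qed.

(* Expanding the (N+1) x (N+1) determinant with a repeated row along that row. *)
Lemma cramer_relation W : size W = N.+1 ->
  \sum_(k < N.+1) ((-1) ^+ k * det_seq (rem_nth k W)) *: nth 0 W k = 0.
Proof.
move=> hW; apply/matrixP => r c; rewrite ord1 summxE !mxE.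
pose ri (i : 'I_N.+1) : 'I_N := if unlift ord0 i is Some i' then i' else r.
pose B := \matrix_(i < N.+1, j < N.+1) nth 0 W j (ri i) 0.
transitivity (\det B); last first.
  apply: (determinant_alternate (i1 := ord0) (i2 := lift ord0 r)); first by rewrite neq_lift.
  by move=> j; rewrite !mxE /ri liftK unlift_none.
rewrite (expand_det_row B ord0); apply: eq_bigr => k _.
rewrite !mxE /ri unlift_none /cofactor /det_seq size_rem_nth hW // eqxx add0n.
rewrite [RHS]mulrC; congr (_ * _ * _); congr (\det _); apply/matrixP => i j.
rewrite /mx_of_cols !mxE /ri liftK nth_rem_nth ?hW //= /bump.
by case: ltnP => h; rewrite ?add0n ?add1n.
Qed.

Lemma plucker_relation W (psi : 'cV[F]_N -> F) : scalar psi -> size W = N.+1 ->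
  \sum_(0 <= k < N.+1) (-1) ^+ k * det_seq (rem_nth k W) * psi (nth 0 W k) = 0.
Proof.
move=> psi_lin /cramer_relation /(congr1 psi).
have psi0 : psi 0 = 0 by have := scalable_linear psi_lin 0 0; rewrite scale0r /= mul0r.
by rewrite (scalar_sum psi_lin) psi0 big_mkord => h; rewrite -[RHS]h.
Qed.

Lemma plucker_tail W (psi : 'cV[F]_N -> F) j : scalar psi -> size W = N.+1 ->
  (forall k, (k < j)%N -> psi (nth 0 W k) = 0) ->
  \sum_(j <= k < N.+1) (-1) ^+ k * det_seq (rem_nth k W) * psi (nth 0 W k) = 0.
Proof.
move=> psi_lin hW h0; case: (leqP j N.+1) => hj; last by rewrite big_geq ?(ltnW hj).
have := plucker_relation psi_lin hW.
rewrite (big_cat_nat (leq0n j) hj) /= big_nat_cond big1 ?add0r // => k.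
by case/andP=> /andP[_ hk] _; rewrite h0 ?mulr0.
Qed.

End ColumnDeterminant.

Section Casoratians.
Variables (F : comNzRingType) (N : nat).
Implicit Type y : nat -> 'cV[F]_N.

Definition cas_last y v := det_seq (mkseq y N.-1 ++ [:: v]).
Definition cas_last2 y v := det_seq (mkseq y N.-2 ++ [:: y N.-1; v]).

Definition cas_f y := det_seq (mkseq y N).
Definition cas_g y := cas_last y (y N).
Definition cas_h y := cas_last y (y N.+1).
Definition cas_mu y := cas_last y (y N.+2).
Definition cas_s y := cas_last2 y (y N).
Definition cas_theta y := cas_last2 y (y N.+1).
Definition cas_nu y := det_seq (mkseq y N.-2.-1 ++ [:: y N.-2; y N.-1; y N]).

Lemma cas_last_scalar y : scalar (cas_last y).
Proof. exact: det_seq_linear. Qed.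

Lemma cas_last2_scalar y : scalar (cas_last2 y).
Proof. by move=> a u v; rewrite /cas_last2 -!(cat_rcons (y N.-1)); apply: det_seq_linear. Qed.

Lemma cas_last_comb y a u v : cas_last y (a *: u + v) = a * cas_last y u + cas_last y v.
Proof. exact: cas_last_scalar. Qed.

Lemma cas_last2_comb y a u v : cas_last2 y (a *: u + v) = a * cas_last2 y u + cas_last2 y v.
Proof. exact: cas_last2_scalar. Qed.

Lemma cas_last_mem y k : (k < N.-1)%N -> cas_last y (y k) = 0.
Proof. by move=> hk; rewrite /cas_last det_seq_meml // mem_mkseq. Qed.

Lemma cas_last2_mem y k : (k < N.-2)%N -> cas_last2 y (y k) = 0.
Proof.
move=> hk; rewrite /cas_last2 -cat_rcons det_seq_meml //.
by rewrite mem_rcons inE mem_mkseq ?orbT.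
Qed.

Lemma cas_last2_dup y : cas_last2 y (y N.-1) = 0.
Proof. by apply: det_seq_dup; rewrite cat_uniq /= inE eqxx !andbF. Qed.

Lemma cas_last_f y : (0 < N)%N -> cas_last y (y N.-1) = cas_f y.
Proof. by move=> hN; rewrite /cas_last cats1 -mkseqS prednK. Qed.

End Casoratians.

Section Minors.
Variables (F : comNzRingType) (M : nat) (y : nat -> 'cV[F]_M.+2).

Lemma cas_f_minor : det_seq (rem_nth M.+2 (mkseq y M.+3)) = cas_f y.
Proof. by rewrite (rem_nth_mkseq y M.+2 0) cats0. Qed.

Lemma cas_g_minor : det_seq (rem_nth M.+1 (mkseq y M.+3)) = cas_g y.
Proof. by rewrite (rem_nth_mkseq y M.+1 1). Qed.

Lemma cas_s_minor : det_seq (rem_nth M (mkseq y M.+3)) = cas_s y.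
Proof. by rewrite (rem_nth_mkseq y M 2). Qed.

Lemma cas_nu_minor : (0 < M)%N -> det_seq (rem_nth M.-1 (mkseq y M.+3)) = cas_nu y.
Proof.
move=> hM; have -> : M.+3 = (3 + M.-1).+1 by lia.
by rewrite rem_nth_mkseq /= prednK.
Qed.

End Minors.

Section Shift.
Variables (F : comNzRingType) (M : nat) (y y' : nat -> 'cV[F]_M.+2) (s : F).
Hypothesis hy : forall k, y' k = s *: y k + y k.+1.

Lemma det_seq_shift_front k R :
  det_seq (mkseq y k.+1 ++ R) = det_seq (y 0%N :: mkseq y' k ++ R).
Proof.
elim: k R => [|k IH] R //; rewrite mkseqS cat_rcons IH.
have -> : y k.+1 = y' k - s *: y k by rewrite hy addrC addKr.
have split P x : y 0%N :: P ++ x :: R = (y 0%N :: P) ++ x :: R by [].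
rewrite split det_seqB (det_seqZ _ _ s (y k)).
have -> : det_seq (y 0%N :: mkseq y' k ++ y k :: R) = 0.
  by rewrite -IH det_seq_meml // mem_mkseq.
by rewrite mulr0 subr0 [mkseq y' k.+1]mkseqS cat_rcons.
Qed.

Lemma det_seq_shift_expand k P R : det_seq (P ++ mkseq y' k ++ R) =
  \sum_(0 <= j < k.+1) s ^+ j * det_seq (P ++ rem_nth j (mkseq y k.+1) ++ R).
Proof.
elim: k P R => [|k IH] P R; first by rewrite big_nat1 /= mul1r.
rewrite mkseqS cat_rcons catA hy det_seqD (det_seqZ _ _ s) -!catA !IH.
rewrite [in RHS]big_nat_recr // rem_nth_mkseq_last [X in s * X]big_nat_recr //.
rewrite rem_nth_mkseq_last.
have -> : \sum_(0 <= j < k) s ^+ j * det_seq (P ++ rem_nth j (mkseq y k.+1) ++ y k :: R) = 0.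
  rewrite big_nat_cond big1 // => j /andP[/andP[_ hj] _].
  by rewrite mkseqS rem_nth_rcons ?size_mkseq // det_seq_mem ?mulr0 // mem_rcons mem_head.
rewrite Monoid.mul1m addrC; congr (_ + _).
  apply: eq_big_nat => j /andP[_ hj].
  by rewrite [mkseq y k.+2]mkseqS rem_nth_rcons ?size_mkseq // cat_rcons.
by rewrite exprS -mulrA [mkseq y k.+1]mkseqS cat_rcons.
Qed.

Lemma cas_last_shift k : cas_last y (y' k) = s * cas_last y (y k) + cas_last y (y k.+1).
Proof. by rewrite hy cas_last_comb. Qed.

Lemma cas_last_shift_lt k : (k < M)%N -> cas_last y (y' k) = 0.
Proof. by move=> hk; rewrite hy cas_last_comb !cas_last_mem ?mulr0 ?addr0 //=; lia. Qed.

Lemma cas_last_shift_M : cas_last y (y' M) = cas_f y.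
Proof. by rewrite hy cas_last_comb cas_last_mem // cas_last_f // mulr0 add0r. Qed.

Lemma cas_last_shift_M1 : cas_last y (y' M.+1) = s * cas_f y + cas_g y.
Proof. by rewrite hy cas_last_comb cas_last_f. Qed.

Lemma cas_last_shift_head : cas_last y' (y 0%N) = (-1) ^+ M.+1 * cas_f y.
Proof.
rewrite /cas_f -[mkseq y _]cats0 det_seq_shift_front cats0.
by rewrite (det_seq_rot [::]) size_mkseq signrMK /cas_last cats1.
Qed.

Lemma cas_last2_shift_head : cas_last2 y' (y 0%N) = (-1) ^+ M.+1 * (s * cas_f y + cas_g y).
Proof.
rewrite -cas_last_shift_M1 /cas_last det_seq_shift_front (det_seq_rot [::]).
by rewrite size_cat size_mkseq addn1 signrMK rcons_cat.
Qed.

Lemma plucker_shift v :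
  cas_f y' * cas_last y v - cas_last y' v * (s * cas_f y + cas_g y)
  + cas_f y * cas_last2 y' v = 0.
Proof.
set W := rcons (mkseq y' M.+2) v.
have hW : size W = M.+3 by rewrite size_rcons size_mkseq.
have nthW k : (k < M.+2)%N -> nth 0 W k = y' k.
  by move=> hk; rewrite nth_rcons size_mkseq hk nth_mkseq.
have nthW2 : nth 0 W M.+2 = v by rewrite nth_rcons size_mkseq ltnn eqxx.
have remW0 : rem_nth M W = mkseq y' M ++ [:: y' M.+1; v].
  by rewrite rem_nth_rcons ?size_mkseq // (rem_nth_mkseq y' M 1) rcons_cat.
have remW1 : rem_nth M.+1 W = mkseq y' M.+1 ++ [:: v].
  by rewrite rem_nth_rcons ?size_mkseq // (rem_nth_mkseq y' M.+1 0) cats0 cats1.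
have remW2 : rem_nth M.+2 W = mkseq y' M.+2 by rewrite rem_nth_last ?size_mkseq.
have vanish k : (k < M)%N -> cas_last y (nth 0 W k) = 0.
  by move=> hk; rewrite nthW ?cas_last_shift_lt //; lia.
have := plucker_tail (cas_last_scalar y) hW vanish.
rewrite big_nat3 (nthW M) // (nthW M.+1) // nthW2 remW0 remW1 remW2.
rewrite -/(cas_f y') -/(cas_last y' v) -/(cas_last2 y' v).
rewrite cas_last_shift_M cas_last_shift_M1 !exprS => h.
by apply: (@lreg_sign F M); rewrite mulr0 -[RHS]h; ring.
Qed.

End Shift.

Section SingleShift.
Variables (F : comNzRingType) (M : nat) (x z : nat -> 'cV[F]_M.+2) (s : F).
Hypothesis hz : forall k, z k = s *: x k + x k.+1.

Lemma bilinear_fgs :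
  cas_f z * (s * cas_g x + cas_h x) - cas_g z * (s * cas_f x + cas_g x) + cas_f x * cas_s z = 0.
Proof. by have := plucker_shift hz (z M.+2); rewrite (cas_last_shift hz). Qed.

Lemma bilinear_fhtheta :
  cas_f z * (s * cas_h x + cas_mu x) - cas_h z * (s * cas_f x + cas_g x)
  + cas_f x * cas_theta z = 0.
Proof. by have := plucker_shift hz (z M.+3); rewrite (cas_last_shift hz). Qed.

Lemma cas_last2_prev : cas_last2 x (x M) = - cas_f x.
Proof. by rewrite /cas_last2 det_seq_swap -cat_rcons -mkseqS cats1 -mkseqS. Qed.

Lemma bilinear_fsnu :
  cas_f z * (s * cas_s x + cas_theta x) - cas_f x * (s * cas_s z - cas_nu z)
  - cas_g z * cas_s x = 0.
Proof.
have psi_z k : cas_last2 x (z k) = s * cas_last2 x (x k) + cas_last2 x (x k.+1).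
  by rewrite hz cas_last2_comb.
have vanish k : (k < M.-1)%N -> cas_last2 x (nth 0 (mkseq z M.+3) k) = 0.
  by move=> hk; rewrite nth_mkseq ?psi_z ?cas_last2_mem ?mulr0 ?addr0 //=; lia.
have := plucker_tail (cas_last2_scalar x) (size_mkseq z M.+3) vanish.
rewrite (big_cat_nat (leq_pred M)) /=; last lia.
rewrite (big_nat_pred (a := (-1) ^+ M * cas_nu z * cas_f x)); first last.
- move=> hM; rewrite /cas_nu det_seq_size ?mulr0 ?mul0r // size_cat size_mkseq /=; lia.
- move=> hM; rewrite nth_mkseq; last lia.
  rewrite psi_z prednK // cas_last2_prev cas_last2_mem; last lia.
  have -> : (-1) ^+ M = - (-1) ^+ M.-1 :> F by rewrite -{1}(prednK hM) exprS mulN1r.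
  by rewrite cas_nu_minor //; ring.
rewrite big_nat3 !nth_mkseq //; try lia.
rewrite cas_s_minor cas_g_minor cas_f_minor !psi_z cas_last2_prev cas_last2_dup.
rewrite -/(cas_s x) -/(cas_theta x) !exprS => h.
by apply: (@lreg_sign F M); rewrite mulr0 -[RHS]h; ring.
Qed.

End SingleShift.

Section DoubleShift.
Variables (F : comNzRingType) (M : nat) (x z w u : nat -> 'cV[F]_M.+2) (s1 s2 : F).
Hypothesis hz : forall k, z k = s1 *: x k + x k.+1.
Hypothesis hw : forall k, w k = s2 *: x k + x k.+1.
Hypothesis huw : forall k, u k = s1 *: w k + w k.+1.
Hypothesis huz : forall k, u k = s2 *: z k + z k.+1.

Lemma bilinear_mixed_fg :
  cas_f z * cas_g w - cas_f w * cas_g z + (s1 - s2) * (cas_f z * cas_f w - cas_f x * cas_f u) = 0.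
Proof.
have hw0 : w 0%N = (s2 - s1) *: x 0%N + z 0%N by rewrite hw hz scalerBl addrA addrNK.
have := plucker_shift huz (w 0%N).
rewrite (cas_last_shift_head huw) (cas_last2_shift_head huw) hw0 cas_last_comb.
rewrite (cas_last_shift_head hz) cas_last_mem // !exprS => h.
by apply: (@lreg_sign F M.+1); rewrite mulr0 -[RHS]h exprS; ring.
Qed.

Variables (K : 'M[F]_M.+2) (e1 e2 e3 : F).
Hypothesis hK : forall k, K *m x k = x k.+4 - e1 *: x k.+3 + e2 *: x k.+2 - e3 *: x k.+1.

Let q := Qpol e1 e2 s1 s2.
Let r := Rpol e1 e2 e3 s1 s2.
(* The signed maximal minors of (x 0, ..., x (M+2)): sum_k c k *: x k = 0. *)
Let c k := (-1) ^+ k * det_seq (rem_nth k (mkseq x M.+3)).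
Let v k := u k.+2 - (s1 + s2 + e1) *: u k.+1 + q *: u k.

(* This is where the polynomials Q and R of the statement come from. *)
Lemma v_combination k : v k = K *m x k + r *: w k + (s1 * s2 * q - r * s2) *: x k.
Proof.
by rewrite /v !huw !hw hK; apply/matrixP => i j; rewrite !mxE /r /q /Rpol /Qpol; ring.
Qed.

Lemma cramer_v : \sum_(0 <= k < M.+3) c k *: v k = r *: \sum_(0 <= k < M.+3) c k *: w k.
Proof.
have cramer_x : \sum_(0 <= k < M.+3) c k *: x k = 0.
  rewrite big_mkord -[RHS](cramer_relation (size_mkseq x M.+3)).
  by apply: eq_bigr => k _; rewrite nth_mkseq.
transitivity (K *m (\sum_(0 <= k < M.+3) c k *: x k) + r *: \sum_(0 <= k < M.+3) c k *: w k
   + (s1 * s2 * q - r * s2) *: (\sum_(0 <= k < M.+3) c k *: x k)).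
  rewrite mulmx_sumr !scaler_sumr -!big_split; apply: eq_bigr => k _.
  by rewrite v_combination !scalerDr -scalemxAr !scalerA [c k * r]mulrC [c k * (_ - _)]mulrC.
by rewrite cramer_x mulmx0 scaler0 add0r addr0.
Qed.

Lemma cas_last_w k : (k <= M.+1)%N -> cas_last u (w k) = (- s1) ^+ k * cas_last u (w 0%N).
Proof.
elim: k => [|k IH] hk; first by rewrite mul1r.
have -> : w k.+1 = u k - s1 *: w k by rewrite huw addrC addKr.
rewrite -[_ - _]addrC -scaleNr cas_last_comb cas_last_mem ?IH ?exprS //; try lia.
by rewrite addr0 mulrA.
Qed.

Lemma cas_last_w_top : cas_last u (w M.+2) = (- s1) ^+ M.+2 * cas_last u (w 0%N) + cas_f u.
Proof.
have -> : w M.+2 = u M.+1 - s1 *: w M.+1 by rewrite huw addrC addKr.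
rewrite -[_ - _]addrC -scaleNr cas_last_comb cas_last_f // (cas_last_w (k := M.+1)) //.
by rewrite [(- s1) ^+ M.+2]exprS mulrA.
Qed.

Lemma sum_c_shift : \sum_(0 <= k < M.+3) c k * (- s1) ^+ k = cas_f z.
Proof.
rewrite /cas_f; have := det_seq_shift_expand hz M.+2 [::] [::]; rewrite !cats0 => ->.
by apply: eq_bigr => k _; rewrite /c (exprNn s1) mulrAC signrMK cats0.
Qed.

Lemma sum_c_w :
  \sum_(0 <= k < M.+3) c k * cas_last u (w k) = cas_last u (w 0%N) * cas_f z + c M.+2 * cas_f u.
Proof.
rewrite -sum_c_shift mulr_sumr [LHS]big_nat_recr // [in RHS]big_nat_recr //= cas_last_w_top.
have -> : \sum_(0 <= k < M.+2) c k * cas_last u (w k)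
    = \sum_(0 <= k < M.+2) cas_last u (w 0%N) * (c k * (- s1) ^+ k).
  by apply: eq_big_nat => k /andP[_ hk]; rewrite cas_last_w; [ring | lia].
by ring.
Qed.

Lemma bilinear_mixed_K :
  Rpol e1 e2 e3 s1 s2 * (cas_f x * cas_f u - cas_f z * cas_f w)
  + Qpol e1 e2 s1 s2 * (cas_g x * cas_f u - cas_f x * cas_g u)
  - (s1 + s2 + e1) * (cas_g x * cas_g u - cas_f x * cas_h u - cas_f u * cas_s x)
  + cas_g x * cas_h u - cas_s x * cas_g u - cas_f x * cas_mu u + cas_nu x * cas_f u = 0.
Proof.
have Omv k : cas_last u (v k) = cas_last u (u k.+2) - (s1 + s2 + e1) * cas_last u (u k.+1)
    + q * cas_last u (u k).
  by rewrite /cas_last det_seqD det_seqB !(det_seqZ (mkseq u _) [::]).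
have := congr1 (cas_last u) cramer_v.
rewrite (scalable_linear (cas_last_scalar u)) !(scalar_sum (cas_last_scalar u)) /= sum_c_w.
have vanish k : (k < M.-1)%N -> cas_last u (v k) = 0.
  by move=> hk; rewrite Omv !cas_last_mem ?mulr0 ?subr0 ?addr0 //; lia.
rewrite (big_cat_nat (leq0n M.-1)) /=; last lia.
rewrite big_nat_cond big1 ?add0r => [|k /andP[/andP[_ hk] _]]; last by rewrite vanish ?mulr0.
rewrite (big_cat_nat (leq_pred M)) /=; last lia.
rewrite (big_nat_pred (a := - ((-1) ^+ M * cas_nu x * cas_f u))); first last.
- move=> hM; rewrite /cas_nu det_seq_size ?mulr0 ?mul0r ?oppr0 // size_cat size_mkseq /=; lia.
- move=> hM; rewrite /c cas_nu_minor // Omv prednK // cas_last_f // !cas_last_mem //; try lia.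
  have -> : (-1) ^+ M = - (-1) ^+ M.-1 :> F by rewrite -{1}(prednK hM) exprS mulN1r.
  by ring.
rewrite big_nat3 /c cas_s_minor cas_g_minor cas_f_minor !Omv cas_last_f //.
rewrite (@cas_last_mem _ _ u M) //.
rewrite -/(cas_g u) -/(cas_h u) -/(cas_mu u) (cas_last_shift_head huw) !exprS.
move/eqP; rewrite -subr_eq0 => /eqP h.
by apply: (@lreg_sign F M.+1); rewrite mulr0 -[RHS]h exprS /r /q; ring.
Qed.

End DoubleShift.

Definition bilinear_system (F : comNzRingType) (N : nat) (x z w u : nat -> 'cV[F]_N)
    (s1 s2 e1 e2 e3 : F) : Prop :=
  (cas_f z * (s1 * cas_g x + cas_h x) - cas_g z * (s1 * cas_f x + cas_g x)
   + cas_f x * cas_s z = 0)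
  /\ (cas_f w * (s2 * cas_g x + cas_h x) - cas_g w * (s2 * cas_f x + cas_g x)
      + cas_f x * cas_s w = 0)
  /\ (cas_f z * (s1 * cas_h x + cas_mu x) - cas_h z * (s1 * cas_f x + cas_g x)
      + cas_f x * cas_theta z = 0)
  /\ (cas_f w * (s2 * cas_h x + cas_mu x) - cas_h w * (s2 * cas_f x + cas_g x)
      + cas_f x * cas_theta w = 0)
  /\ (cas_f z * (s1 * cas_s x + cas_theta x) - cas_f x * (s1 * cas_s z - cas_nu z)
      - cas_g z * cas_s x = 0)
  /\ (cas_f w * (s2 * cas_s x + cas_theta x) - cas_f x * (s2 * cas_s w - cas_nu w)
      - cas_g w * cas_s x = 0)
  /\ (cas_f z * cas_g w - cas_f w * cas_g z
      + (s1 - s2) * (cas_f z * cas_f w - cas_f x * cas_f u) = 0)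
  /\ (Rpol e1 e2 e3 s1 s2 * (cas_f x * cas_f u - cas_f z * cas_f w)
      + Qpol e1 e2 s1 s2 * (cas_g x * cas_f u - cas_f x * cas_g u)
      - (s1 + s2 + e1) * (cas_g x * cas_g u - cas_f x * cas_h u - cas_f u * cas_s x)
      + cas_g x * cas_h u - cas_s x * cas_g u - cas_f x * cas_mu u + cas_nu x * cas_f u = 0).

Lemma det_seq1 (F : comNzRingType) (v : 'cV[F]_1) : det_seq [:: v] = v 0 0.
Proof. by rewrite /det_seq /= det_mx11 /mx_of_cols mxE. Qed.

Lemma bilinear_system1 (F : comNzRingType) (x z w u : nat -> 'cV[F]_1) (K : 'M[F]_1)
    (s1 s2 e1 e2 e3 : F) :
  (forall k, z k = s1 *: x k + x k.+1) -> (forall k, w k = s2 *: x k + x k.+1) ->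
  (forall k, u k = s1 *: w k + w k.+1) -> (forall k, u k = s2 *: z k + z k.+1) ->
  (forall k, K *m x k = x k.+4 - e1 *: x k.+3 + e2 *: x k.+2 - e3 *: x k.+1) ->
  bilinear_system x z w u s1 s2 e1 e2 e3.
Proof.
move=> hz hw huw _ hK.
have last1 (y : nat -> 'cV[F]_1) v : cas_last y v = v 0 0 by exact: det_seq1.
have last2 (y : nat -> 'cV[F]_1) v : cas_last2 y v = 0 by exact: det_seq_size.
have nu0 (y : nat -> 'cV[F]_1) : cas_nu y = 0 by exact: det_seq_size.
have coord a (v1 v2 : 'cV[F]_1) : (a *: v1 + v2) 0 0 = a * v1 0 0 + v2 0 0 by rewrite !mxE.
have xK k : x k.+4 0 0 = K 0 0 * x k 0 0 + e1 * x k.+3 0 0 - e2 * x k.+2 0 0 + e3 * x k.+1 0 0.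
  by have := congr1 (fun v : 'cV[F]_1 => v 0 0) (hK k); rewrite !mxE big_ord1 => ->; ring.
rewrite /bilinear_system /cas_f /cas_g /cas_h /cas_mu /cas_s /cas_theta !last1 !last2 !nu0.
rewrite /= !det_seq1 !huw !hw !hz !coord !xK /Rpol /Qpol.
by do !split; ring.
Qed.

Lemma casoratian_bilinear_system (F : comNzRingType) (N : nat) (x z w u : nat -> 'cV[F]_N)
    (K : 'M[F]_N) (s1 s2 e1 e2 e3 : F) : (0 < N)%N ->
  (forall k, z k = s1 *: x k + x k.+1) -> (forall k, w k = s2 *: x k + x k.+1) ->
  (forall k, u k = s1 *: w k + w k.+1) -> (forall k, u k = s2 *: z k + z k.+1) ->
  (forall k, K *m x k = x k.+4 - e1 *: x k.+3 + e2 *: x k.+2 - e3 *: x k.+1) ->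
  bilinear_system x z w u s1 s2 e1 e2 e3.
Proof.
case: N x z w u K => [//|[|M]] x z w u K _ hz hw huw huz hK; first exact: bilinear_system1 hK.
do !split.
- exact: bilinear_fgs hz.
- exact: bilinear_fgs hw.
- exact: bilinear_fhtheta hz.
- exact: bilinear_fhtheta hw.
- exact: bilinear_fsnu hz.
- exact: bilinear_fsnu hw.
- exact: bilinear_mixed_fg hz hw huw huz.
- exact: (bilinear_mixed_K hz hw huw hK).
Qed.

Section CasoratianOfIntegers.
Variables (F : comNzRingType) (N : nat) (ph : int -> 'cV[F]_N).
Let y (k : nat) := ph k.

Lemma casoratian_det_seq s : casoratian ph s = det_seq (map ph s).
Proof.
rewrite /casoratian /det_seq size_map; case: eqP => // hs.
by congr (\det _); apply/matrixP => i j; rewrite /mx_of_cols !mxE (nth_map 0) ?hs.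
Qed.

Lemma irun_sub (n k : nat) : irun (Posz n - Posz k) = map Posz (iota 0 (n.+1 - k)).
Proof.
rewrite /irun; case: ltrP => hnk.
  by have -> : (n.+1 - k = 0)%N by move: hnk; rewrite ltrBlDr add0r ltz_nat; lia.
have -> : absz (Posz n - Posz k) = (n - k)%N.
  by move: hnk; rewrite subr_ge0 lez_nat => hnk; rewrite subzn ?absz_nat.
by move: hnk; rewrite subr_ge0 lez_nat => hnk; congr (map _ (iota _ _)); lia.
Qed.

Lemma map_irun j : map ph (irun (Posz N - Posz j)) = mkseq y (N.+1 - j).
Proof. by rewrite irun_sub -map_comp. Qed.

Lemma casoratian_f : casoratian ph (irun (Posz N - 1)) = cas_f y.
Proof. by rewrite casoratian_det_seq (map_irun 1) subn1. Qed.

Lemma casoratian_g : casoratian ph (irun (Posz N - 2) ++ [:: Posz N]) = cas_g y.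
Proof. by rewrite casoratian_det_seq map_cat (map_irun 2) subn2. Qed.

Lemma casoratian_h : casoratian ph (irun (Posz N - 2) ++ [:: Posz N + 1]) = cas_h y.
Proof. by rewrite casoratian_det_seq map_cat (map_irun 2) subn2 -PoszD addn1. Qed.

Lemma casoratian_mu : casoratian ph (irun (Posz N - 2) ++ [:: Posz N + 2]) = cas_mu y.
Proof. by rewrite casoratian_det_seq map_cat (map_irun 2) subn2 -PoszD addn2. Qed.

Lemma casoratian_s : (0 < N)%N ->
  casoratian ph (irun (Posz N - 3) ++ [:: Posz N - 1; Posz N]) = cas_s y.
Proof.
move=> hN; rewrite casoratian_det_seq map_cat (map_irun 3) /cas_s /cas_last2 /=.
by congr (det_seq (mkseq _ _ ++ [:: ph _; _])); lia.
Qed.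

Lemma casoratian_theta : (0 < N)%N ->
  casoratian ph (irun (Posz N - 3) ++ [:: Posz N - 1; Posz N + 1]) = cas_theta y.
Proof.
move=> hN; rewrite casoratian_det_seq map_cat (map_irun 3) /cas_theta /cas_last2 /=.
by congr (det_seq (mkseq _ _ ++ [:: ph _; ph _])); lia.
Qed.

Lemma casoratian_nu : (0 < N)%N ->
  casoratian ph (irun (Posz N - 4) ++ [:: Posz N - 2; Posz N - 1; Posz N]) = cas_nu y.
Proof.
move=> hN; rewrite casoratian_det_seq map_cat (map_irun 4) /cas_nu /=.
have [hN2|hN1] := ltnP 1 N; first by congr (det_seq (mkseq _ _ ++ [:: ph _; ph _; _])); lia.
by rewrite !det_seq_size // size_cat size_mkseq /=; lia.
Qed.

End CasoratianOfIntegers.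

Lemma shift_relation_nat (R : pzRingType) (V : lmodType R) (ph : int -> int -> V) (s : R) :
  (forall n l, s *: ph (n - 1) l = ph n l - ph (n - 1) (l + 1)) ->
  forall n (k : nat), ph (n + 1) k = s *: ph n k + ph n k.+1.
Proof.
move=> hs n k; have := hs (n + 1) k; rewrite addrK => ->.
have -> : Posz k + 1 = Posz k.+1 by lia.
by rewrite subrK.
Qed.

Lemma recurrence_nat (F : comNzRingType) (N : nat) (K : 'M[F]_N) (ph : int -> 'cV[F]_N)
    (e1 e2 e3 : F) :
  (forall l, K *m ph l = ph (l + 4) - e1 *: ph (l + 3) + e2 *: ph (l + 2) - e3 *: ph (l + 1)) ->
  forall k : nat, K *m ph k = ph k.+4 - e1 *: ph k.+3 + e2 *: ph k.+2 - e3 *: ph k.+1.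
Proof. by move=> hK k; rewrite hK; congr (ph _ - _ *: ph _ + _ *: ph _ - _ *: ph _); lia. Qed.

Unset Implicit Arguments. Set Strict Implicit. Set Printing Implicit Defensive.
Local Open Scope complex_scope.

Theorem theorem3p2 (R : realType) (al1 al2 al3 delta p q a b : R[i])
  (hpq : p != q) (hpa : p != a) (hpb : p != b)
  (hqa : q != a) (hqb : q != b) (hab : a != b)
  (N : nat) (hN : (0 < N)%N)
  (phi : int -> int -> int -> int -> int -> 'cV[R[i]]_N)
  (K : 'M[R[i]]_N) :
  let s1 := p - delta in let s2 := q - delta in
  let s3 := a - delta in let s4 := b - delta in
  let e1 := eps1 al3 delta in let e2 := eps2 al2 al3 delta in
  let e3 := eps3 al1 al2 al3 delta in
  (forall n m al be l, s1 *: phi (n - 1) m al be l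
      = phi n m al be l - phi (n - 1) m al be (l + 1)) ->
  (forall n m al be l, s2 *: phi n (m - 1) al be l
      = phi n m al be l - phi n (m - 1) al be (l + 1)) ->
  (forall n m al be l, s3 *: phi n m (al - 1) be l
      = phi n m al be l - phi n m (al - 1) be (l + 1)) ->
  (forall n m al be l, s4 *: phi n m al (be - 1) l
      = phi n m al be l - phi n m al (be - 1) (l + 1)) ->
  (forall n m al be l, K *m phi n m al be l
      = phi n m al be (l + 4) - e1 *: phi n m al be (l + 3)
        + e2 *: phi n m al be (l + 2) - e3 *: phi n m al be (l + 1)) ->
  let Nz : int := Posz N in
  let cas (n m al be : int) (s : seq int) := casoratian (phi n m al be) s in
  let f n m al be := cas n m al be (irun (Nz - 1)) in
  let g n m al be := cas n m al be (irun (Nz - 2) ++ [:: Nz]) in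
  let h n m al be := cas n m al be (irun (Nz - 2) ++ [:: Nz + 1]) in
  let s n m al be := cas n m al be (irun (Nz - 3) ++ [:: Nz - 1; Nz]) in
  let th n m al be := cas n m al be (irun (Nz - 3) ++ [:: Nz - 1; Nz + 1]) in
  let mu n m al be := cas n m al be (irun (Nz - 2) ++ [:: Nz + 2]) in
  let nu n m al be := cas n m al be (irun (Nz - 4) ++ [:: Nz - 2; Nz - 1; Nz]) in
  forall n m al be : int,
  let F := f n m al be in let G := g n m al be in let H := h n m al be in
  let S := s n m al be in let TH := th n m al be in
  let MU := mu n m al be in let NU := nu n m al be in
  (* tilde: n+1 ; hat: m+1 ; hat-tilde: n+1, m+1 *)
  let Ft := f (n + 1) m al be in let Gt := g (n + 1) m al be in
  let Ht := h (n + 1) m al be in let St := s (n + 1) m al be in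
  let THt := th (n + 1) m al be in let NUt := nu (n + 1) m al be in
  let Fh := f n (m + 1) al be in let Gh := g n (m + 1) al be in
  let Hh := h n (m + 1) al be in let Sh := s n (m + 1) al be in
  let THh := th n (m + 1) al be in let NUh := nu n (m + 1) al be in
  let Fht := f (n + 1) (m + 1) al be in let Ght := g (n + 1) (m + 1) al be in
  let Hht := h (n + 1) (m + 1) al be in let MUht := mu (n + 1) (m + 1) al be in
  (Ft * (s1 * G + H) - Gt * (s1 * F + G) + F * St = 0) /\
      (      Fh * (s2 * G + H) - Gh * (s2 * F + G) + F * Sh = 0) /\
      (      Ft * (s1 * H + MU) - Ht * (s1 * F + G) + F * THt = 0) /\
      (      Fh * (s2 * H + MU) - Hh * (s2 * F + G) + F * THh = 0) /\
      (      Ft * (s1 * S + TH) - F * (s1 * St - NUt) - Gt * S = 0) /\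
      (      Fh * (s2 * S + TH) - F * (s2 * Sh - NUh) - Gh * S = 0) /\
      (      Ft * Gh - Fh * Gt + (s1 - s2) * (Ft * Fh - F * Fht) = 0) /\
      (      Rpol e1 e2 e3 s1 s2 * (F * Fht - Ft * Fh)
      + Qpol e1 e2 s1 s2 * (G * Fht - F * Ght)
      - (s1 + s2 + e1) * (G * Ght - F * Hht - Fht * S)
      + G * Hht - S * Ght - F * MUht + NU * Fht = 0).
Proof.
move=> s1 s2 s3 s4 e1 e2 e3 hn hm _ _ hK Nz cas f g h s th mu nu n m al be.
have hz := shift_relation_nat (ph := fun n l => phi n m al be l) (fun n l => hn n m al be l) n.
have hw := shift_relation_nat (ph := fun m l => phi n m al be l) (fun m l => hm n m al be l) m.
have huw := shift_relation_nat (ph := fun n l => phi n (m + 1) al be l)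
  (fun n l => hn n (m + 1) al be l) n.
have huz := shift_relation_nat (ph := fun m l => phi (n + 1) m al be l)
  (fun m l => hm (n + 1) m al be l) m.
have hKx := recurrence_nat (hK n m al be).
pose y n m al be (k : nat) := phi n m al be k.
have Ef n m al be : f n m al be = cas_f (y n m al be) := casoratian_f _.
have Eg n m al be : g n m al be = cas_g (y n m al be) := casoratian_g _.
have Eh n m al be : h n m al be = cas_h (y n m al be) := casoratian_h _.
have Emu n m al be : mu n m al be = cas_mu (y n m al be) := casoratian_mu _.
have Es n m al be : s n m al be = cas_s (y n m al be) := casoratian_s _ hN.
have Eth n m al be : th n m al be = cas_theta (y n m al be) := casoratian_theta _ hN.
have Enu n m al be : nu n m al be = cas_nu (y n m al be) := casoratian_nu _ hN.
cbv zeta; rewrite !Ef !Eg !Eh !Emu !Es !Eth !Enu.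
exact: casoratian_bilinear_system hN hz hw huw huz hKx.
Qed.
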